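(* Let $C\subset\mathbb{R}^2$ be a centrally symmetric convex body and $P=(G,p,r)$ a $C$-packing. If $C$ is not a parallelogram, then $(G,p)$ is a planar framework.
   Context: A centrally symmetric convex body is a compact convex set with non-empty interior and $C=-C$. A $C$-packing $(G,p,r)$ is a finite family $\{r_vC+p_v:v\in V\}$ ($r_v>0$, $p_v\in\mathbb{R}^2$) with pairwise disjoint interiors, whose contact graph $G=(V,E)$ has $vw\in E$ iff $r_vC+p_v$ and $r_wC+p_w$ intersect. A framework $(G,p)$ is planar if $p_v\ne p_w$ for distinct $v,w$ and the segments $[p_v,p_w]$, $vw\in E$, intersect each other only at common endpoints. *)

From mathcomp Require Import all_boot all_order all_algebra.
From mathcomp Require Import all_classical all_reals all_analysis.
Import numFieldNormedType.Exports.
Set Implicit Arguments. Unset Strict Implicit. Unset Printing Implicit Defensive.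
Import Order.TTheory GRing.Theory Num.Theory.
Local Open Scope classical_set_scope.
Local Open Scope ring_scope.

Section Defs.
Variable R : realType.
Notation pt := 'rV[R]_2.

Definition segment (a b : pt) : set pt :=
  [set x | exists t : R, 0 <= t <= 1 /\ x = (1 - t) *: a + t *: b].

Definition convex_set (C : set pt) : Prop :=
  forall x y, C x -> C y -> forall t : R, 0 <= t <= 1 -> C ((1 - t) *: x + t *: y).

Definition cs_convex_body (C : set pt) : Prop :=
  [/\ compact C, convex_set C, interior C !=set0 & forall x, C x <-> C (- x)].

Definition parallelogram (C : set pt) : Prop :=
  exists x0 u v : pt,
    (forall a b : R, a *: u + b *: v = 0 -> a = 0 /\ b = 0) /\
    C = [set x | exists s t : R, 0 <= s <= 1 /\ 0 <= t <= 1 /\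
                   x = x0 + s *: u + t *: v].

Definition homot (C : set pt) (r : R) (p : pt) : set pt :=
  [set r *: c + p | c in C].

Definition is_packing (V : finType) (C : set pt) (p : V -> pt) (r : V -> R) : Prop :=
  (forall v, 0 < r v) /\
  (forall v w, v != w ->
     interior (homot C (r v) (p v)) `&` interior (homot C (r w) (p w)) = set0).

Definition contact (V : finType) (C : set pt) (p : V -> pt) (r : V -> R) (v w : V) : Prop :=
  v != w /\ homot C (r v) (p v) `&` homot C (r w) (p w) !=set0.

Definition planar_framework (V : finType) (E : V -> V -> Prop) (p : V -> pt) : Prop :=
  (forall v w, v != w -> p v != p w) /\
  (forall v w v' w', E v w -> E v' w' ->
     ~ ((v == v' /\ w == w') \/ (v == w' /\ w == v')) ->
     forall x, segment (p v) (p w) x -> segment (p v') (p w') x ->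
       (x = p v \/ x = p w) /\ (x = p v' \/ x = p w')).
End Defs.

(* Let |.| be the norm whose unit ball is C; |y| >= rho is expressed below as
   ~ interior C (rho^-1 *: y). Copies r_v C + p_v have disjoint interiors iff
   |p_w - p_v| >= r_v + r_w, and they touch iff |p_w - p_v| <= r_v + r_w.
   A contact segment [p_v, p_w] cannot pass through a third centre p_z, since then
   |p_w - p_v| = |p_z - p_v| + |p_w - p_z| >= r_v + r_w + 2 r_z; two overlapping
   edges with a common end reduce to this. If the edges ab and cd cross at x, the
   triangle inequalities |p_c - p_a| <= |x - p_a| + |p_c - x| (and likewise for
   ad, bc, bd) add up to exactly the sum of the packing lower bounds, so all four
   are equalities. With u, w the unit directions of the two edges, equality in the
   triangle inequality puts a point of each open chord between +-u and +-w on the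
   boundary of C; four such chords force u, w to be independent and C to be the
   parallelogram with vertices +-u, +-w. *)

From Pilot Require Import Defs.
From mathcomp Require Import all_boot all_order all_algebra.
From mathcomp Require Import all_classical all_reals all_analysis.
From mathcomp Require Import ring lra.
Import numFieldNormedType.Exports.
Import Order.TTheory GRing.Theory Num.Theory.
Set Implicit Arguments. Unset Strict Implicit.
Local Open Scope classical_set_scope.
Local Open Scope ring_scope.

Section Plane.
Variable R : realType.
Notation pt := 'rV[R]_2.
Implicit Types (C : set pt) (a b u w x y z : pt).

Lemma interior_normP (V : normedModType R) (A : set V) (z : V) :
  interior A z <-> exists2 e : R, 0 < e & forall y : V, `|z - y| < e -> A y.
Proof.
split=> [/nbhs_ballP [e e0 he]|[e e0 he]].
  by exists e => // y hy; apply: he; rewrite -ball_normE.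
by apply/nbhs_ballP; exists e => // y; rewrite -ball_normE => /he.
Qed.

Lemma interior_convex_comb C z y t : Defs.convex_set C -> interior C z -> C y ->
  0 < t <= 1 -> interior C (t *: z + (1 - t) *: y).
Proof.
move=> convC /interior_normP [e e0 he] Cy /andP [t0 t1].
apply/interior_normP; exists (t * e) => [|q hq]; first exact: mulr_gt0.
pose q' := t^-1 *: (q - (1 - t) *: y).
have -> : q = (1 - t) *: y + t *: q'.
  by rewrite /q' scalerA mulfV ?gt_eqF // scale1r addrC subrK.
apply: (convC _ _ Cy); last by rewrite t1 ltW.
apply: he; have -> : z - q' = t^-1 *: (t *: z + (1 - t) *: y - q).
  by apply/rowP => i; rewrite !mxE; field; rewrite gt_eqF.
by rewrite normrZ ger0_norm ?invr_ge0 ?ltW // ltr_pdivrMl // mulrC.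
Qed.

Lemma interior_homot C c rho q : 0 < rho -> interior C c ->
  interior (homot C rho q) (rho *: c + q).
Proof.
move=> rho0 /interior_normP [e e0 he]; apply/interior_normP.
exists (rho * e) => [|y hy]; first exact: mulr_gt0.
exists (rho^-1 *: (y - q)); last by rewrite scalerA mulfV ?gt_eqF // scale1r subrK.
apply: he; have -> : c - rho^-1 *: (y - q) = rho^-1 *: (rho *: c + q - y).
  by apply/rowP => i; rewrite !mxE; field; rewrite gt_eqF.
by rewrite normrZ ger0_norm ?invr_ge0 ?ltW // ltr_pdivrMl // mulrC.
Qed.

Definition open_segment a b : set pt :=
  [set x | exists t : R, 0 < t < 1 /\ x = (1 - t) *: a + t *: b].

Lemma open_segment_sym a b x : open_segment a b x -> open_segment b a x.
Proof.
move=> [t [/andP [t0 t1] ->]]; exists (1 - t); split; first by apply/andP; lra.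
by apply/rowP => i; rewrite !mxE; ring.
Qed.

Lemma segment_end_or_open a b x :
  segment a b x -> (x = a \/ x = b) \/ open_segment a b x.
Proof.
move=> [t [/andP [t0 t1] ->]].
have [->|tn0] := eqVneq t 0; first by left; left; rewrite subr0 scale1r scale0r addr0.
have [->|tn1] := eqVneq t 1; first by left; right; rewrite subrr scale0r scale1r add0r.
by right; exists t; rewrite !lt_neqAle eq_sym tn0 t0 tn1 t1.
Qed.

Definition det2 u w := u 0 0 * w 0 1 - u 0 1 * w 0 0.

Lemma row2P x y : x 0 0 = y 0 0 -> x 0 1 = y 0 1 -> x = y.
Proof.
move=> e0 e1; apply/rowP => i.
by have [->|->] : i = 0 \/ i = 1 by case: i => -[|[|//]] ?; [left|right]; apply/val_inj.
Qed.

Lemma det2_coord u w y : det2 u w != 0 ->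
  y = (det2 y w / det2 u w) *: u + (det2 u y / det2 u w) *: w.
Proof. by rewrite /det2 => d; apply: row2P; rewrite !mxE; field. Qed.

Lemma det2_free u w (a b : R) : det2 u w != 0 -> a *: u + b *: w = 0 -> a = 0 /\ b = 0.
Proof.
move=> d e.
have e0 : a * u 0 0 + b * w 0 0 = 0 by have := congr1 (fun M : pt => M 0 0) e; rewrite !mxE.
have e1 : a * u 0 1 + b * w 0 1 = 0 by have := congr1 (fun M : pt => M 0 1) e; rewrite !mxE.
have ha : a * det2 u w = w 0 1 * (a * u 0 0 + b * w 0 0) - w 0 0 * (a * u 0 1 + b * w 0 1).
  by rewrite /det2; ring.
have hb : b * det2 u w = u 0 0 * (a * u 0 1 + b * w 0 1) - u 0 1 * (a * u 0 0 + b * w 0 0).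
  by rewrite /det2; ring.
rewrite e0 e1 !mulr0 subrr in ha hb.
by split; apply/eqP; [move: ha|move: hb] => /eqP; rewrite mulf_eq0 (negbTE d) orbF.
Qed.

Lemma det2_eq0_colinear u w : u != 0 -> det2 u w = 0 -> exists k, w = k *: u.
Proof.
rewrite /det2 => u0 d.
have [u00|u00] := eqVneq (u 0 0) 0.
  have u01 : u 0 1 != 0.
    by apply: contraNneq u0 => u01; apply/eqP/row2P; rewrite !mxE.
  exists (w 0 1 / u 0 1); apply: row2P; rewrite !mxE; last by field.
  rewrite u00 mulr0 in d *; apply: (mulfI u01); lra.
exists (w 0 0 / u 0 0); apply: row2P; rewrite !mxE; first by field.
apply: (mulfI u00); have -> : u 0 0 * (w 0 0 / u 0 0 * u 0 1) = u 0 1 * w 0 0 by field.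
lra.
Qed.

Definition boundary_chord C x y :=
  exists2 m : R, 0 < m < 1 & ~ interior C (m *: x + (1 - m) *: y).

Lemma boundary_chord_of_tight C x y (a b : R) : 0 < a -> 0 < b ->
  ~ interior C ((a + b)^-1 *: (a *: x + b *: y)) -> boundary_chord C x y.
Proof.
move=> a0 b0 nint; exists (a / (a + b)).
  by rewrite divr_gt0 ?addr_gt0 //= ltr_pdivrMr ?addr_gt0 // mul1r ltrDl.
have -> : a / (a + b) *: x + (1 - a / (a + b)) *: y = (a + b)^-1 *: (a *: x + b *: y).
  by apply/rowP => i; rewrite !mxE; field; rewrite gt_eqF ?addr_gt0.
exact: nint.
Qed.

End Plane.

Section ConvexBody.
Variable R : realType.
Notation pt := 'rV[R]_2.
Variable C : set pt.
Hypotheses (convC : Defs.convex_set C) (symC : forall x, C x <-> C (- x))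
  (intC : interior C !=set0).

Lemma C_opp x : C x -> C (- x).
Proof. by move/symC. Qed.

Lemma interior_opp z : interior C z -> interior C (- z).
Proof.
move=> /interior_normP [e e0 he]; apply/interior_normP; exists e => // y hy.
apply/symC/he; suff -> : z - - y = - (- z - y) by rewrite normrN.
by rewrite opprB !opprK addrC.
Qed.

Lemma interior0 : interior C 0.
Proof.
case: intC => z zC.
have := interior_convex_comb convC zC (interior_subset (interior_opp zC)) (_ : 0 < 2^-1 <= 1).
have -> : 2^-1 *: z + (1 - 2^-1) *: - z = 0 :> pt.
  by apply/rowP => i; rewrite !mxE; field.
by apply; apply/andP; split; lra.
Qed.

Lemma interior_scale y l : C y -> `|l| < 1 -> interior C (l *: y).
Proof.
wlog l0 : y l / 0 <= l => [wl Cy l1|Cy].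
  case: (lerP 0 l) => [l0|/ltW ln]; first exact: wl.
  rewrite -[l *: y]opprK -scalerN -scaleNr.
  by apply: wl; [rewrite oppr_ge0 | exact: C_opp | rewrite normrN].
rewrite ger0_norm // => l1.
have := interior_convex_comb convC interior0 Cy (_ : 0 < 1 - l <= 1).
rewrite scaler0 add0r subKr; apply; apply/andP; split; lra.
Qed.

Lemma interior_comb2 x y a b : C x -> C y -> 0 <= a -> 0 <= b -> a + b < 1 ->
  interior C (a *: x + b *: y).
Proof.
move=> Cx Cy a0 b0 ab.
case: (lerP (a + b) 0) => [ab0|ab0].
  have [-> ->] : a = 0 /\ b = 0 by split; lra.
  by rewrite !scale0r addr0; exact: interior0.
have -> : a *: x + b *: y = (a + b) *: ((1 - b / (a + b)) *: x + (b / (a + b)) *: y).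
  by apply/rowP => i; rewrite !mxE; field; rewrite gt_eqF.
apply: interior_scale; last by rewrite ger0_norm ?ltW.
by apply: convC => //; apply/andP; split; [apply: divr_ge0 | rewrite ler_pdivrMr // mul1r]; lra.
Qed.

Lemma interior_comb3 x y z a b c : C x -> C y -> C z ->
  0 <= a -> 0 <= b -> 0 <= c -> a + b + c < 1 -> interior C (a *: x + b *: y + c *: z).
Proof.
move=> Cx Cy Cz a0 b0 c0 abc.
case: (lerP (b + c) 0) => [bc0|bc0].
  have [-> ->] : b = 0 /\ c = 0 by split; lra.
  rewrite !scale0r !addr0 -[a *: x]addr0 -(scale0r x).
  by apply: interior_comb2 => //; lra.
have -> : a *: x + b *: y + c *: z =
    a *: x + (b + c) *: ((1 - c / (b + c)) *: y + (c / (b + c)) *: z).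
  by apply/rowP => i; rewrite !mxE; field; rewrite gt_eqF.
apply: interior_comb2 => //; try lra.
by apply: convC => //; apply/andP; split; [apply: divr_ge0 | rewrite ler_pdivrMr // mul1r]; lra.
Qed.

Lemma gauge_triangle x y a b rho : C x -> C y -> 0 <= a -> 0 <= b -> 0 < rho ->
  ~ interior C (rho^-1 *: (a *: x + b *: y)) -> rho <= a + b.
Proof.
move=> Cx Cy a0 b0 rho0 nint; rewrite leNgt; apply/negP => abrho; apply: nint.
have rho_inv0 : 0 <= rho^-1 by rewrite invr_ge0 ltW.
rewrite scalerDr !scalerA; apply: interior_comb2; rewrite ?mulr_ge0 //.
by rewrite -mulrDr mulrC ltr_pdivrMr // mul1r.
Qed.

Lemma boundary_chord_support U W s t : C U -> C W -> boundary_chord C U W ->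
  C (s *: U + t *: W) -> s + t <= 1.
Proof.
move=> CU CW [m /andP [m0 m1] nint] CsW; rewrite leNgt; apply/negP => st; apply: nint.
(* k is small enough to keep all three coefficients below nonnegative, and
   they sum to 1 - k (s + t - 1) < 1. *)
pose K := 1 + s ^+ 2 + t ^+ 2.
have K0 : 0 < K by rewrite /K; nra.
pose k := m * (1 - m) / K.
have k0 : 0 < k by rewrite /k divr_gt0 //; nra.
have kK : k * K = m * (1 - m) by rewrite /k mulfVK ?gt_eqF.
have [sK tK] : s <= K /\ t <= K by rewrite /K; split; nra.
have [ks kt] : k * s <= m /\ k * t <= 1 - m by split; nra.
have -> : m *: U + (1 - m) *: W =
    k *: (s *: U + t *: W) + (m - k * s) *: U + (1 - m - k * t) *: W.
  by apply/rowP => i; rewrite !mxE; ring.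
by apply: interior_comb3 => //; nra.
Qed.

Lemma boundary_chords_det2_neq0 u w : C u -> C w -> u != 0 ->
  boundary_chord C u w -> boundary_chord C (- u) w -> det2 u w != 0.
Proof.
(* If w = k u, then -u (for k >= 0) or u (for k < 0) lies beyond one of the chords. *)
move=> Cu Cw u0 chw chnw; apply/eqP => /(det2_eq0_colinear u0) [k wk].
case: (lerP 0 k) => k0.
  have := boundary_chord_support (C_opp Cu) Cw chnw (s := 1 + k) (t := 1).
  rewrite (_ : _ *: - u + _ *: w = - u); last by rewrite wk; apply/rowP => i; rewrite !mxE; ring.
  by move/(_ (C_opp Cu)); lra.
have := boundary_chord_support Cu Cw chw (s := 1 - k) (t := 1).
rewrite (_ : _ *: u + _ *: w = u); last by rewrite wk; apply/rowP => i; rewrite !mxE; ring.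
by move/(_ Cu); lra.
Qed.

Lemma parallelogram_of_boundary_chords u w : C u -> C w -> u != 0 ->
  boundary_chord C u w -> boundary_chord C u (- w) ->
  boundary_chord C (- u) w -> boundary_chord C (- u) (- w) -> parallelogram C.
Proof.
move=> Cu Cw u0 ch ch_w ch_u ch_uw.
have d := boundary_chords_det2_neq0 Cu Cw u0 ch ch_u.
exists (- u), (u + w), (u - w); split.
  move=> a b; rewrite (_ : _ + _ = (a + b) *: u + (a - b) *: w); last first.
    by apply/rowP => i; rewrite !mxE; ring.
  by move/(det2_free d) => [] ? ?; split; lra.
apply/seteqP; split => [y Cy | _ [s [t [/andP [s0 s1] [/andP [t0 t1] ->]]]]].
  set a := det2 y w / det2 u w; set b := det2 u y / det2 u w.
  have yE : y = a *: u + b *: w by exact: det2_coord.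
  have := boundary_chord_support Cu Cw ch (s := a) (t := b).
  have := boundary_chord_support Cu (C_opp Cw) ch_w (s := a) (t := - b).
  have := boundary_chord_support (C_opp Cu) Cw ch_u (s := - a) (t := b).
  have := boundary_chord_support (C_opp Cu) (C_opp Cw) ch_uw (s := - a) (t := - b).
  rewrite !scaleNr !scalerN !opprK -yE => /(_ Cy) h1 /(_ Cy) h2 /(_ Cy) h3 /(_ Cy) h4.
  exists ((1 + a + b) / 2), ((1 + a - b) / 2).
  split; last split; try by apply/andP; split; lra.
  by rewrite {1}yE; apply/rowP => i; rewrite !mxE; field.
have -> : - u + s *: (u + w) + t *: (u - w) =
    (1 - t) *: ((1 - s) *: (- u) + s *: w) + t *: ((1 - s) *: (- w) + s *: u).
  by apply/rowP => i; rewrite !mxE; ring.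
by apply: convC; rewrite ?s0 ?t0 //; apply: convC; rewrite ?s0 ?s1 //; apply: C_opp.
Qed.

Variables (V : finType) (p : V -> pt) (r : V -> R).
Hypothesis pack : is_packing C p r.
Notation contact := (contact C p r).

Lemma radius_gt0 v : 0 < r v.
Proof. exact: pack.1. Qed.

Lemma contact_sym v w : contact v w -> contact w v.
Proof. by move=> [vw [y [Cv Cw]]]; split; [rewrite eq_sym | exists y]. Qed.

Lemma contact_unit v w : contact v w -> C ((r v + r w)^-1 *: (p w - p v)).
Proof.
move=> [_ [y [[c Cc yE] [c' Cc' yE']]]].
have [rv rw] := (radius_gt0 v, radius_gt0 w).
have -> : (r v + r w)^-1 *: (p w - p v) =
    (1 - r w / (r v + r w)) *: c + (r w / (r v + r w)) *: - c'.
  rewrite -(addrK (r w *: c') (p w)) -(addrK (r v *: c) (p v)).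
  rewrite [p w + _]addrC [p v + _]addrC yE yE'.
  by apply/rowP => i; rewrite !mxE; field; rewrite gt_eqF ?addr_gt0.
apply: convC => //; first exact: C_opp.
by apply/andP; split; [apply: divr_ge0 | rewrite ler_pdivrMr ?addr_gt0 // mul1r]; lra.
Qed.

Lemma packing_not_interior v w : v != w ->
  ~ interior C ((r v + r w)^-1 *: (p w - p v)).
Proof.
move=> vw uC; set u := _ *: _ in uC.
have [rv rw] := (radius_gt0 v, radius_gt0 w).
have hv := interior_homot (p v) rv uC.
have := interior_homot (p w) rw (interior_opp uC).
have -> : r w *: - u + p w = r v *: u + p v.
  by apply/rowP => i; rewrite !mxE; field; rewrite gt_eqF ?addr_gt0.
move=> hw; suff : (set0 : set pt) (r v *: u + p v) by [].
by rewrite -(pack.2 v w vw).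
Qed.

Lemma packing_injective v w : v != w -> p v != p w.
Proof.
move=> vw; apply: contra_notN (packing_not_interior vw) => /eqP ->.
by rewrite subrr scaler0; exact: interior0.
Qed.

Lemma packing_radii_le v z x y a b : v != z -> C x -> C y -> 0 <= a -> 0 <= b ->
  p z - p v = a *: x + b *: y -> r v + r z <= a + b.
Proof.
move=> vz Cx Cy a0 b0 E; apply: (gauge_triangle Cx Cy a0 b0).
  by rewrite addr_gt0 ?radius_gt0.
by rewrite -E; exact: packing_not_interior.
Qed.

Lemma packing_tight_chord v z x y a b : v != z -> 0 < a -> 0 < b ->
  p z - p v = a *: x + b *: y -> r v + r z = a + b -> boundary_chord C x y.
Proof.
move=> vz a0 b0 E rE; apply: (boundary_chord_of_tight a0 b0).
by rewrite -rE -E; exact: packing_not_interior.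
Qed.

Lemma vertex_off_edge v w z : contact v w -> z != v -> z != w ->
  ~ segment (p v) (p w) (p z).
Proof.
move=> cvw zv zw [s [/andP [s0 s1] pzE]].
have Cu := contact_unit cvw; set u := _ *: _ in Cu.
have [[rv rw] rz] := (radius_gt0 v, radius_gt0 w, radius_gt0 z).
have hv : r v + r z <= s * (r v + r w) + 0.
  apply: (packing_radii_le _ Cu Cu) => //; first by rewrite eq_sym.
    by rewrite mulr_ge0 // addr_ge0 // ltW.
  by rewrite pzE /u; apply/rowP => i; rewrite !mxE; field; rewrite gt_eqF ?addr_gt0.
have hw : r w + r z <= (1 - s) * (r v + r w) + 0.
  apply: (packing_radii_le _ (C_opp Cu) (C_opp Cu)) => //; first by rewrite eq_sym.
    by rewrite mulr_ge0 ?subr_ge0 // addr_ge0 // ltW.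
  by rewrite pzE /u; apply/rowP => i; rewrite !mxE; field; rewrite gt_eqF ?addr_gt0.
lra.
Qed.

Lemma segment_vertex_end v w z : contact v w -> segment (p v) (p w) (p z) ->
  p z = p v \/ p z = p w.
Proof.
move=> cvw S; have [->|zv] := eqVneq z v; first by left.
have [->|zw] := eqVneq z w; first by right.
by case: (vertex_off_edge cvw zv zw S).
Qed.

Lemma common_end_edges_disjoint z y1 y2 x : contact z y1 -> contact z y2 -> y1 != y2 ->
  open_segment (p z) (p y1) x -> open_segment (p z) (p y2) x -> False.
Proof.
move=> c1 c2 y12 [s [s01 xs]] [t [t01 xt]].
wlog st : y1 y2 s t c1 c2 y12 s01 t01 xs xt / s <= t.
  move=> wl; case: (lerP s t) => [st|/ltW ts]; first exact: (wl y1 y2 s t).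
  by apply: (wl y2 y1 t s) => //; rewrite eq_sym.
move: s01 t01 => /andP [s0 s1] /andP [t0 t1].
have y2z : y2 != z by rewrite eq_sym; case: c2.
have y21 : y2 != y1 by rewrite eq_sym.
apply: (vertex_off_edge c1 y2z y21); exists (s / t); split.
  by apply/andP; split; [apply: divr_ge0 | rewrite ler_pdivrMr // mul1r]; lra.
apply/rowP => i; have := congr1 (fun M : pt => M 0 i) (etrans (esym xs) xt).
rewrite !mxE => e.
have -> : p y2 0 i = t^-1 * ((t - s) * p z 0 i + s * p y1 0 i).
  by rewrite -[p y2 0 i](mulKf (lt0r_neq0 t0)); congr (_ * _); lra.
by field; rewrite gt_eqF.
Qed.

Lemma open_edge_point a b x : contact a b -> open_segment (p a) (p b) x ->
  exists u al be, [/\ C u, u != 0, 0 < al & 0 < be] /\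
    [/\ al + be = r a + r b, p a = x - al *: u & p b = x + be *: u].
Proof.
move=> cab [s [/andP [s0 s1] xs]].
have [ra rb] := (radius_gt0 a, radius_gt0 b).
have rab : r a + r b != 0 by rewrite gt_eqF ?addr_gt0.
exists ((r a + r b)^-1 *: (p b - p a)), (s * (r a + r b)), ((1 - s) * (r a + r b)).
split; split; rewrite ?mulr_gt0 ?subr_gt0 ?addr_gt0 //.
- exact: contact_unit.
- apply: contra_notN (packing_not_interior cab.1) => /eqP ->; exact: interior0.
- by ring.
- by rewrite xs; apply/rowP => i; rewrite !mxE; field.
- by rewrite xs; apply/rowP => i; rewrite !mxE; field.
Qed.

Lemma crossing_edges_parallelogram a b c d x : contact a b -> contact c d ->
  a != c -> a != d -> b != c -> b != d ->
  open_segment (p a) (p b) x -> open_segment (p c) (p d) x -> parallelogram C.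
Proof.
move=> cab ccd ac ad bc bd Oab Ocd.
have [u [al [be [[Cu u0 al0 be0] [sab paE pbE]]]]] := open_edge_point cab Oab.
have [w [ga [de [[Cw _ ga0 de0] [scd pcE pdE]]]]] := open_edge_point ccd Ocd.
have [Cnu Cnw] := (C_opp Cu, C_opp Cw).
have Eac : p c - p a = al *: u + ga *: - w.
  by rewrite pcE paE; apply/rowP => i; rewrite !mxE; ring.
have Ead : p d - p a = al *: u + de *: w.
  by rewrite pdE paE; apply/rowP => i; rewrite !mxE; ring.
have Ebc : p c - p b = be *: - u + ga *: - w.
  by rewrite pcE pbE; apply/rowP => i; rewrite !mxE; ring.
have Ebd : p d - p b = be *: - u + de *: w.
  by rewrite pdE pbE; apply/rowP => i; rewrite !mxE; ring.
have lac := packing_radii_le ac Cu Cnw (ltW al0) (ltW ga0) Eac.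
have lad := packing_radii_le ad Cu Cw (ltW al0) (ltW de0) Ead.
have lbc := packing_radii_le bc Cnu Cnw (ltW be0) (ltW ga0) Ebc.
have lbd := packing_radii_le bd Cnu Cw (ltW be0) (ltW de0) Ebd.
(* The four bounds add up to al + be + ga + de on both sides, so each is tight. *)
apply: (parallelogram_of_boundary_chords Cu Cw u0).
- by apply: (packing_tight_chord ad al0 de0 Ead); lra.
- by apply: (packing_tight_chord ac al0 ga0 Eac); lra.
- by apply: (packing_tight_chord bd be0 de0 Ebd); lra.
- by apply: (packing_tight_chord bc be0 ga0 Ebc); lra.
Qed.

Lemma open_edges_meet_parallelogram v w v' w' x : contact v w -> contact v' w' ->
  ~ ((v == v' /\ w == w') \/ (v == w' /\ w == v')) ->
  open_segment (p v) (p w) x -> open_segment (p v') (p w') x -> parallelogram C.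
Proof.
move=> c c' ne O O'.
have [vv'|vv'] := eqVneq v v'.
  rewrite -vv' in c' O'.
  have ww' : w != w' by apply/negP => /eqP ww'; apply: ne; left; rewrite vv' ww' !eqxx.
  by case: (common_end_edges_disjoint c c' ww' O O').
have [vw'|vw'] := eqVneq v w'.
  rewrite -vw' in c' O'.
  have wv' : w != v' by apply/negP => /eqP wv'; apply: ne; right; rewrite vw' wv' !eqxx.
  by case: (common_end_edges_disjoint c (contact_sym c') wv' O (open_segment_sym O')).
have [wv'|wv'] := eqVneq w v'.
  rewrite -wv' in c' O'.
  by case: (common_end_edges_disjoint (contact_sym c) c' vw' (open_segment_sym O) O').
have [ww'|ww'] := eqVneq w w'.
  rewrite -ww' in c' O'.
  by case: (common_end_edges_disjoint (contact_sym c) (contact_sym c') vv'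
    (open_segment_sym O) (open_segment_sym O')).
exact: crossing_edges_parallelogram c c' vv' vw' wv' ww' O O'.
Qed.
End ConvexBody.

Theorem lemma3p11 (R : realType) (C : set 'rV[R]_2) (V : finType)
  (p : V -> 'rV[R]_2) (r : V -> R) :
  cs_convex_body C -> is_packing C p r -> ~ parallelogram C ->
  planar_framework (contact C p r) p.
Proof.
move=> [_ convC intC symC] pack notpar.
have on_edge := segment_vertex_end convC symC intC pack.
split=> [v w|v w v' w' c c' ne x S S']; first exact: (packing_injective convC symC intC pack).
have [E|O] := segment_end_or_open S.
  by case: E => -> in S' *; (split; [by [left | right] | exact: on_edge c' S']).
have [E'|O'] := segment_end_or_open S'.
  by case: E' => -> in S *; (split; [exact: on_edge c S | by [left | right]]).
by case: notpar; exact: (open_edges_meet_parallelogram convC symC intC pack c c' ne O O').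
Qed.
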